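(* Consider the clique inference problem with nonnegative vertex potentials and the Potts clique potential $C(\mathbf{v})=\lambda\sum_{v\in V}n_v(\mathbf{v})^2$ with $\lambda>0$. Let $\hat{\mathbf{v}}$ be the assignment returned by the $\alpha$-pass algorithm and $\mathbf{v}^*$ an assignment maximizing $F$. Then $F(\hat{\mathbf{v}})\ge\frac{4}{5}F(\mathbf{v}^* )$.
   Context: Clique inference problem: there are $n$ vertices $1,\dots,n$, a finite set $V$ of values ($|V|\ge 2$), real vertex potentials $\psi_{jv}$ ($1\le j\le n$, $v\in V$), and a clique potential $C$ depending only on the counts $n_v(\mathbf{v})=|\{j:v_j=v\}|$. The objective is $F(\mathbf{v})=\sum_{j=1}^n\psi_{jv_j}+C(\mathbf{v})$ over $\mathbf{v}\in V^n$. The $\alpha$-pass algorithm: for each $\alpha\in V$, sort the vertices in decreasing order of $\psi_{j\alpha}-\max_{v\neq\alpha}\psi_{jv}$; for each $k\in\{1,\dots,n\}$ form the assignment giving the first $k$ sorted vertices the value $\alpha$ and every other vertex a value $v\ne\alpha$ maximizing $\psi_{jv}$; output the formed assignment with the largest $F$ over all $\alpha$ and $k$. *)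

From HB Require Import structures.
From mathcomp Require Import all_boot all_order all_algebra all_fingroup.
Set Implicit Arguments. Unset Strict Implicit. Unset Printing Implicit Defensive.
Import Order.TTheory GRing.Theory Num.Theory.
Local Open Scope ring_scope.

Section CliqueInference.
Variables (R : realFieldType) (V : finType) (n : nat).

Definition assignment := {ffun 'I_n -> V}.

Definition nval (a : assignment) (v : V) : nat := #|[set j | a j == v]|.

Definition potts (lam : R) (a : assignment) : R :=
  lam * \sum_(v : V) ((nval a v)%:R ^+ 2).

Definition Fobj (psi : 'I_n -> V -> R) (lam : R) (a : assignment) : R :=
  \sum_(j < n) psi j (a j) + potts lam a.

Definition best_other (psi : 'I_n -> V -> R) (alpha : V) (b : 'I_n -> V) :=
  forall j, b j != alpha /\ (forall v, v != alpha -> psi j v <= psi j (b j)).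

(* sort key psi_{j alpha} - max_{v <> alpha} psi_{j v}, with the max realised by b *)
Definition akey (psi : 'I_n -> V -> R) (alpha : V) (b : 'I_n -> V) (j : 'I_n) : R :=
  psi j alpha - psi j (b j).

Definition sorted_decr (psi : 'I_n -> V -> R) (alpha : V) (b : 'I_n -> V)
  (s : {perm 'I_n}) :=
  forall i i' : 'I_n, (i < i')%N -> akey psi alpha b (s i') <= akey psi alpha b (s i).

(* first k sorted vertices get alpha, the others their best non-alpha value *)
Definition formed (alpha : V) (b : 'I_n -> V) (s : {perm 'I_n}) (k : nat)
  : assignment := [ffun j => if (nat_of_ord ((s^-1)%g j) < k)%N then alpha else b j].

(* vhat is a possible output of the alpha-pass algorithm (any tie-breaking) *)
Definition alpha_pass_output (psi : 'I_n -> V -> R) (lam : R) (vhat : assignment) :=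
  exists (B : V -> 'I_n -> V) (S : V -> {perm 'I_n}),
    (forall alpha, best_other psi alpha (B alpha) /\ sorted_decr psi alpha (B alpha) (S alpha))
    /\ (exists alpha k, (1 <= k <= n)%N /\ vhat = formed alpha (B alpha) (S alpha) k)
    /\ (forall alpha k, (1 <= k <= n)%N ->
          Fobj psi lam (formed alpha (B alpha) (S alpha) k) <= Fobj psi lam vhat).

End CliqueInference.

From HB Require Import structures.
From mathcomp Require Import all_boot all_order all_algebra all_fingroup.
From mathcomp Require Import lra.
Import Order.TTheory GRing.Theory Num.Theory.
Local Open Scope ring_scope.

(* Let alpha be a most frequent value of an optimum vstar, with m = n_alpha(vstar).
   An exchange argument shows that the alpha-pass assignment giving alpha to
   the m best vertices has at least the vertex potential P of vstar, so
   F(vhat) >= P + lam m^2; the pass with k = n gives F(vhat) >= lam n^2.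
   Since every n_v <= m, C(vstar) <= lam m n, and 4 m n <= 4 m^2 + n^2 yields
   4/5 (P + lam m n) <= 4/5 (P + lam m^2) + 1/5 lam n^2. *)

Definition prefix {n} (s : {perm 'I_n}) (k : nat) : {set 'I_n} :=
  [set j | ((s^-1)%g j < k)%N].

Lemma card_prefix {n} (s : {perm 'I_n}) k : (k <= n)%N -> #|prefix s k| = k.
Proof.
move=> kn; rewrite -(card_preimset _ (@perm_inj _ s)) -sum1_card.
rewrite (eq_bigl (fun i : 'I_n => (i < k)%N)); last by move=> i; rewrite !inE permK.
by rewrite (big_ord_narrow kn) sum1_card card_ord.
Qed.

(* Exchange argument: [f] is at least [c] on the prefix and at most [c] off it,
   where [c] is the value of [f] at the last vertex of the prefix. *)
Lemma sum_le_prefix (R : numDomainType) {n} (f : 'I_n -> R) (s : {perm 'I_n})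
    (A : {set 'I_n}) :
  (forall i i' : 'I_n, (i < i')%N -> f (s i') <= f (s i)) ->
  \sum_(j in A) f j <= \sum_(j in prefix s #|A|) f j.
Proof.
move=> fs; set k := #|A|; have kn : (k <= n)%N by rewrite -[n]card_ord max_card.
case: (posnP k) => [k0 | k_gt0].
  have A0 : A = set0 by apply/eqP; rewrite -cards_eq0 -/k k0.
  by rewrite /k A0 cards0 big_set0.
have lt_kn : (k.-1 < n)%N by rewrite prednK.
set c := f (s (Ordinal lt_kn)).
have in_prefix j : j \in prefix s k -> c <= f j.
  rewrite inE => jk; rewrite /c -(permKV s j).
  have := leq_trans jk (leqSpred k); rewrite ltnS leq_eqVlt => /orP[/eqP e | lt].
    by have -> : Ordinal lt_kn = (s^-1)%g j by apply: val_inj; rewrite /= e.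
  exact: fs.
have notin_prefix j : j \notin prefix s k -> f j <= c.
  rewrite inE -leqNgt => jk; rewrite -(permKV s j).
  by apply: fs; rewrite /= prednK.
rewrite (big_setID (prefix s k)) [X in _ <= X](big_setID A) /= setIC lerD2l.
have card_diff : #|A :\: prefix s k| = #|prefix s k :\: A|.
  by rewrite !cardsD setIC card_prefix.
apply: (@le_trans _ _ (#|A :\: prefix s k|%:R * c)).
  rewrite -sum1_card natr_sum mulr_suml; apply: ler_sum => j.
  by rewrite inE mul1r => /andP[/notin_prefix].
rewrite card_diff -sum1_card natr_sum mulr_suml; apply: ler_sum => j.
by rewrite inE mul1r => /andP[_ /in_prefix].
Qed.

Section Counts.
Context {V : finType} {n : nat}.

Lemma sum_nval (a : assignment V n) : (\sum_(v : V) nval a v)%N = n.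
Proof.
under eq_bigr do rewrite /nval -sum1_card.
rewrite (exchange_big_dep predT) //= -[RHS]card_ord -sum1_card.
apply: eq_bigr => j _; rewrite (bigD1 (a j)) ?inE //= big1 ?addn0 // => v.
by rewrite inE => /andP[/eqP-> /negP].
Qed.

Lemma nval_le (a : assignment V n) v : (nval a v <= n)%N.
Proof. by rewrite /nval -[X in (_ <= X)%N]card_ord max_card. Qed.

Lemma nval_formed {alpha : V} {b : 'I_n -> V} (s : {perm 'I_n}) k :
  (forall j, b j != alpha) -> (k <= n)%N -> nval (formed alpha b s k) alpha = k.
Proof.
move=> b_ne kn; rewrite /nval -[RHS](card_prefix s k kn); apply: eq_card => j.
by rewrite !inE /formed ffunE; case: ifP; rewrite ?eqxx // => _; apply/negbTE.
Qed.

Lemma potts_ge_sqr (R : realFieldType) (lam : R) (a : assignment V n) v :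
  0 <= lam -> lam * (nval a v)%:R ^+ 2 <= potts lam a.
Proof.
move=> lam0; rewrite /potts ler_wpM2l // (bigD1 v) //= lerDl.
by apply: sumr_ge0 => w _; apply: sqr_ge0.
Qed.

Lemma potts_le_mode (R : realFieldType) (lam : R) (a : assignment V n) alpha :
  0 <= lam -> (forall v, (nval a v <= nval a alpha)%N) ->
  potts lam a <= lam * ((nval a alpha)%:R * n%:R).
Proof.
move=> lam0 mode; rewrite /potts ler_wpM2l // -[X in _ * X%:R](sum_nval a) natr_sum mulr_sumr.
by apply: ler_sum => v _; rewrite expr2 ler_wpM2r // ler_nat.
Qed.

End Counts.

Section VertexPotentials.
Variables (R : realFieldType) (V : finType) (n : nat) (psi : 'I_n -> V -> R).
Variables (alpha : V) (b : 'I_n -> V).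

Lemma vertex_sum_formed s k :
  \sum_(j < n) psi j (formed alpha b s k j) =
  \sum_(j < n) psi j (b j) + \sum_(j in prefix s k) akey psi alpha b j.
Proof.
rewrite [X in _ + X]big_mkcond -big_split; apply: eq_bigr => j _ /=.
by rewrite /formed ffunE inE /akey; case: ifP => _; rewrite ?addr0 // addrC subrK.
Qed.

Hypothesis b_best : best_other psi alpha b.

Lemma vertex_sum_le (a : assignment V n) :
  \sum_(j < n) psi j (a j) <=
  \sum_(j < n) psi j (b j) + \sum_(j in [set j | a j == alpha]) akey psi alpha b j.
Proof.
rewrite [X in _ + X]big_mkcond -big_split; apply: ler_sum => j _ /=.
rewrite inE /akey; case: eqP => [-> | ne]; first by rewrite addrC subrK.
by rewrite addr0; apply: (b_best j).2; apply/eqP.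
Qed.

Lemma vertex_sum_le_formed (s : {perm 'I_n}) (a : assignment V n) :
  sorted_decr psi alpha b s ->
  \sum_(j < n) psi j (a j) <= \sum_(j < n) psi j (formed alpha b s (nval a alpha) j).
Proof.
move=> s_sorted; rewrite vertex_sum_formed.
by apply: le_trans (vertex_sum_le a) _; rewrite lerD2l; apply: sum_le_prefix.
Qed.

Lemma Fobj_formed_ge (lam : R) s k : 0 <= lam -> (k <= n)%N ->
  \sum_(j < n) psi j (formed alpha b s k j) + lam * k%:R ^+ 2 <=
  Fobj psi lam (formed alpha b s k).
Proof.
move=> lam0 kn; rewrite /Fobj lerD2l.
have b_ne j : b j != alpha by case: (b_best j).
by rewrite -[X in lam * X%:R ^+ 2](nval_formed s k b_ne kn) potts_ge_sqr.
Qed.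

End VertexPotentials.

Lemma four_fifths_combination (R : realFieldType) (lam P C F x y : R) :
  0 <= lam -> C <= lam * (x * y) ->
  P + lam * x ^+ 2 <= F -> lam * y ^+ 2 <= F -> 4 / 5 * (P + C) <= F.
Proof.
move=> lam0 hC hx hy.
have amgm : 0 <= lam * (y - 2 * x) ^+ 2 by rewrite mulr_ge0 ?sqr_ge0.
nra.
Qed.

Theorem theorem3 (R : realFieldType) (V : finType) (n : nat)
  (psi : 'I_n -> V -> R) (lam : R) :
  (1 < #|V|)%N ->
  (forall j v, 0 <= psi j v) ->
  0 < lam ->
  forall vhat vstar : assignment V n,
    alpha_pass_output psi lam vhat ->
    (forall a : assignment V n, Fobj psi lam a <= Fobj psi lam vstar) ->
    4 / 5 * Fobj psi lam vstar <= Fobj psi lam vhat.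
Proof.
(* [1 < #|V|] only ensures that the [best_other] choices exist; they are given here. *)
move=> _ psi_ge0 /ltW lam_ge0 vhat vstar [B [S [BS_ok [[a0 [k0 [k0_range _]]] vhat_max]]]] _.
have n_gt0 : (0 < n)%N by case/andP: k0_range; apply: leq_trans.
have [alpha _ mode] := @arg_maxnP V (vstar (Ordinal n_gt0)) predT (nval vstar) isT.
set m := nval vstar alpha.
have m_le_n : (m <= n)%N := nval_le vstar alpha.
have m_gt0 : (0 < m)%N.
  apply: leq_trans (mode _ isT).
  by apply/card_gt0P; exists (Ordinal n_gt0); rewrite inE.
have m_range : (0 < m <= n)%N by rewrite m_gt0 m_le_n.
have [b_best s_sorted] := BS_ok alpha.
have potts_vstar : potts lam vstar <= lam * (m%:R * n%:R).
  by apply: potts_le_mode => // v; apply: mode.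
have F_ge_m : \sum_(j < n) psi j (vstar j) + lam * m%:R ^+ 2 <= Fobj psi lam vhat.
  apply: le_trans; last exact: (vhat_max alpha m m_range).
  apply: le_trans; last by apply: Fobj_formed_ge.
  by rewrite lerD2r; apply: vertex_sum_le_formed.
have F_ge_n : lam * n%:R ^+ 2 <= Fobj psi lam vhat.
  have n_range : (0 < n <= n)%N by rewrite n_gt0 leqnn.
  apply: le_trans; last exact: (vhat_max alpha n n_range).
  apply: le_trans; last by apply: Fobj_formed_ge.
  by rewrite lerDr sumr_ge0.
exact: four_fifths_combination lam_ge0 potts_vstar F_ge_m F_ge_n.
Qed.
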